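(* Let $G$ be a countably infinite graph for which there exists a finite set $S\subseteq V(G)$ such that $G-S$ has no finite dominating set. Then for every $r\in\mathbb{N}$ and every $r$-coloring of the edges of $K_\mathbb{N}$, there is a monochromatic copy of $G$ whose vertex set has positive upper density (i.e. $G$ is $r$-Ramsey-dense).
   Context: $K_{\mathbb{N}}$ is the complete graph on $\mathbb{N}=\{1,2,\dots\}$. A copy of $G$ is a subgraph of $K_\mathbb{N}$ isomorphic to $G$; monochromatic means all its edges have the same color. Upper density of $V\subseteq\mathbb{N}$: $\overline{d}(V)=\limsup_{t\to\infty}|V\cap\{1,\dots,t\}|/t$. A set $X\subseteq V(G)$ is dominating if every vertex of $V(G)\setminus X$ has a neighbor in $X$. *)

From HB Require Import structures.
From mathcomp Require Import all_boot all_order all_algebra.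
From mathcomp Require Import all_classical all_reals all_analysis.
From mathcomp Require Import Rstruct.
Set Implicit Arguments. Unset Strict Implicit. Unset Printing Implicit Defensive.
Import Order.TTheory GRing.Theory Num.Theory.

Local Open Scope classical_set_scope.
Local Open Scope ring_scope.

Record graph := Graph {
  adj : nat -> nat -> Prop;
  adj_sym : forall u v, adj u v -> adj v u;
  adj_irrefl : forall v, ~ adj v v }.

Definition dominating_minus (G : graph) (S X : seq nat) : Prop :=
  (forall x, x \in X -> x \notin S) /\
  (forall v, v \notin S -> v \notin X -> exists2 x, x \in X & adj G v x).

Definition no_finite_dominating_minus (G : graph) (S : seq nat) : Prop :=
  forall X : seq nat, ~ dominating_minus G S X.

(* Upper density of V subset of N = {1,2,...}:
   limsup_{t -> oo} |V ∩ {1,...,t}| / t  (sequence indexed from t = 1). *)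
Definition upper_density (V : set nat) : \bar Rdefinitions.R :=
  limn_esup (fun n : nat =>
    ((\sum_(1 <= k < n.+2) (`[< V k >] : bool)%:R) / (n.+1)%:R)%:E).

(* An r-colouring of the edges of K_N (vertices 1,2,...): a colour for every
   pair {x, y} with x <> y, independent of the order of x, y. *)
Definition edge_coloring (r : nat) (c : nat -> nat -> 'I_r) : Prop :=
  forall x y, c x y = c y x.

(* f is an embedding of G into K_N (an isomorphism of G onto the subgraph of
   K_N with edge set {f u f v : uv in E(G)}), and that copy is monochromatic
   under c. *)
Definition mono_copy (G : graph) (r : nat) (c : nat -> nat -> 'I_r)
    (f : nat -> nat) : Prop :=
  injective f /\ (forall v, (0 < f v)%N) /\
  exists col : 'I_r, forall u v, adj G u v -> c (f u) (f v) = col.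

From HB Require Import structures.
From mathcomp Require Import all_boot all_order all_algebra.
From mathcomp Require Import all_classical all_reals all_analysis.
From mathcomp Require Import Rstruct lra.
Set Implicit Arguments. Unset Strict Implicit. Unset Printing Implicit Defensive.
Import Order.TTheory GRing.Theory Num.Theory.
Local Open Scope classical_set_scope.
Local Open Scope ring_scope.

(* Sets of density zero ("null" sets) form an ideal not containing N, so the
   sets with null complement form a proper filter; extend it to an ultrafilter
   U all of whose members have positive upper density.  Since U is an
   ultrafilter, some colour j is such that the set A of vertices x for which
   U-almost every y has c x y = j belongs to U.

   We then build the copy of G by a back-and-forth construction, as an
   increasing chain of finite partial copies (association lists from vertices
   of G to positive integers).  First the vertices of S are mapped into A;
   afterwards step n
   - ("forth") maps vertex n of G, if necessary, to a fresh element of A that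
     has colour j towards all images so far (possible as U is closed under
     finite intersections and its members are infinite);
   - ("back") puts n itself into the image whenever n lies in the set D of
     elements of A having colour j towards the images of S: its preimage is a
     vertex outside S with no neighbour among the mapped vertices outside S,
     which exists precisely because G - S has no finite dominating set.
   The limit map is a monochromatic copy of G whose image contains D; since
   D belongs to U, the image has positive upper density. *)

(** * Sets of density zero *)

Definition count_upto (V : set nat) (n : nat) : nat :=
  count (fun k => `[< V k >]) (iota 1 n.+1).

Definition null (V : set nat) : Prop :=
  forall e : Rdefinitions.R, 0 < e -> exists N, forall n, (N <= n)%N ->
    (count_upto V n)%:R / (n.+1)%:R <= e.

Lemma sum_count_upto (V : set nat) (n : nat) :
  (\sum_(1 <= k < n.+2) (`[< V k >] : bool)%:R : Rdefinitions.R) =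
  (count_upto V n)%:R.
Proof.
rewrite /count_upto /index_iota subn1.
elim: (iota 1 _) => [|a s IH]; first by rewrite big_nil.
by rewrite big_cons /= IH natrD.
Qed.

Lemma null_sub (A B : set nat) : A `<=` B -> null B -> null A.
Proof.
move=> AB nullB e e0; have [N HN] := nullB e e0; exists N => n Nn.
apply: le_trans (HN n Nn); rewrite ler_pM2r ?invr_gt0 ?ltr0n // ler_nat.
by apply: sub_count => k /asboolP Ak; apply/asboolP; exact: AB.
Qed.

Lemma null_setU (A B : set nat) : null A -> null B -> null (A `|` B).
Proof.
move=> nullA nullB e e0.
have e20 : 0 < e / 2 by rewrite divr_gt0.
have [N1 H1] := nullA _ e20; have [N2 H2] := nullB _ e20.
exists (maxn N1 N2) => n; rewrite geq_max => /andP[n1 n2].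
have countU : (count_upto (A `|` B) n <= count_upto A n + count_upto B n)%N.
  rewrite /count_upto -count_predUI; apply: leq_trans (leq_addr _ _).
  apply: sub_count => k /asboolP [Ak|Bk] /=; apply/orP; [left|right];
    exact/asboolP.
apply: le_trans (_ : (count_upto A n)%:R / (n.+1)%:R
                     + (count_upto B n)%:R / (n.+1)%:R <= e).
  by rewrite -mulrDl ler_pM2r ?invr_gt0 ?ltr0n // -natrD ler_nat.
by rewrite [e](splitr e) lerD ?H1 ?H2.
Qed.

Lemma null_bounded (V : set nat) (K : nat) :
  (forall n, (count_upto V n <= K)%N) -> null V.
Proof.
move=> HK e e0; exists (Num.truncn (K%:R / e)) => n Nn.
rewrite ler_pdivrMr ?ltr0n //.
apply: le_trans (_ : K%:R <= _); first by rewrite ler_nat.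
rewrite -ler_pdivrMl // mulrC; apply/ltW/(lt_le_trans (truncnS_gt _)).
by rewrite ler_nat.
Qed.

Lemma null_finite (L : seq nat) : null [set x | x \in L].
Proof.
apply: (@null_bounded _ (size L)) => n; rewrite /count_upto -size_filter.
apply: leq_trans (size_undup L); apply: uniq_leq_size.
  by rewrite filter_uniq // iota_uniq.
by move=> x; rewrite mem_filter mem_undup => /andP[/asboolP].
Qed.

Lemma not_null_setT : ~ null setT.
Proof.
move=> /(_ (1/2)) [//|N /(_ N (leqnn N))].
rewrite /count_upto (eq_count (a2 := predT)); last by move=> k; rewrite asboolT.
rewrite count_predT size_iota divff ?pnatr_eq0 // => h; lra.
Qed.

Lemma upper_density_gt0 (V : set nat) : ~ null V -> (0 < upper_density V)%E.
Proof.
move=> notnull; rewrite ltNge; apply/negP => le0; apply: notnull.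
move: le0; rewrite /upper_density; set u := (X in limn_esup X) => le0.
have u_ge0 n : (0 <= u n)%E by rewrite /u lee_fin sum_count_upto divr_ge0.
have /fine_cvgP [_ cvg0] := limn_esup_le_cvg le0 u_ge0.
move=> e e0; have [N _ HN] := (cvgrPdist_le _ _).1 cvg0 e e0.
exists N => n /HN /=; rewrite /u /= -sum_count_upto sub0r normrN.
exact/le_trans/ler_norm.
Qed.

(** * An ultrafilter of sets of positive upper density *)

(* Sets with null complement form a proper filter; any ultrafilter
   containing it consists of non-null sets. *)
Lemma nonnull_ultrafilter :
  exists U : set_system nat, UltraFilter U /\ forall B, U B -> ~ null B.
Proof.
pose conull := [set B : set nat | null (~` B)].
have conull_proper : ProperFilter conull.
  split; first by rewrite /conull /= setC0; exact: not_null_setT.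
  split.
  - by rewrite /conull /= setCT; exact: null_sub (sub0set _) (null_finite [::]).
  - by move=> A B; rewrite /conull /= setCI; exact: null_setU.
  - by move=> A B AB; rewrite /conull /=; apply: null_sub; exact: subsetC.
have [U [UU conullU]] := ultraFilterLemma conull_proper.
exists U; split => // B UB nullB.
have UBC : U (~` B) by apply: conullU; rewrite /conull /= setCK.
by apply: (@filter_not_empty _ U); rewrite -(setICr B); exact: filterI.
Qed.

Lemma filter_seqI (T : Type) (I : eqType) (F : set_system T) (s : seq I)
    (Q : I -> set T) :
  Filter F -> (forall i, i \in s -> F (Q i)) ->
  F [set x | forall i, i \in s -> Q i x].
Proof.
move=> FF; elim: s => [|a s IH] FQ; first by apply: filterS filterT => x _ i.
have Fs : F [set x | forall i, i \in s -> Q i x].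
  by apply: IH => i si; apply: FQ; rewrite in_cons si orbT.
apply: filterS (filterI (FQ a (mem_head _ _)) Fs) => x [Qa Qs] i.
by rewrite in_cons => /orP[/eqP->//|]; exact: Qs.
Qed.

Lemma ultra_finite_cover (T : Type) (I : finType) (F : set_system T)
    (P : I -> set T) :
  UltraFilter F -> (forall x, exists i, P i x) -> exists i, F (P i).
Proof.
move=> FU cover; apply: contrapT => noneF.
have FC i : i \in enum I -> F (~` P i).
  move=> _; have [FPi|//] := in_ultra_setVsetC (P i) FU.
  by exfalso; apply: noneF; exists i.
apply: (@filter_not_empty _ F); apply: filterS (filter_seqI _ FC) => x HC.
by have [i Pi] := cover x; exact: (HC i (mem_enum _ _) Pi).
Qed.

Definition colour_nbhd (T I : Type) (F : set_system T) (c : T -> T -> I)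
    (j : I) : set T :=
  [set x | F [set y | c x y = j]].

Lemma ultra_colour (T : Type) (I : finType) (F : set_system T)
    (c : T -> T -> I) :
  UltraFilter F -> exists j, F (colour_nbhd F c j).
Proof.
move=> FU; apply: ultra_finite_cover => x.
by apply: ultra_finite_cover => y; exists (c x y).
Qed.

Lemma nonnull_avoid (B : set nat) (L : seq nat) :
  ~ null B -> exists x, [/\ B x, x \notin L & (0 < x)%N].
Proof.
move=> notnullB; apply: contrapT => noX; apply: notnullB.
apply: null_sub (null_finite (0%N :: L)) => x Bx /=.
rewrite in_cons; case: x Bx => [//|x] Bx; apply/negPn/negP => xL.
by apply: noX; exists x.+1.
Qed.

Lemma ultra_conull (U : set_system nat) (B : set nat) :
  UltraFilter U -> (forall A, U A -> ~ null A) -> null (~` B) -> U B.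
Proof.
move=> UU Unonnull nullBC.
by have [//|UBC] := in_ultra_setVsetC B UU; case: (Unonnull _ UBC).
Qed.

Lemma uniq_map_inj (T T' : eqType) (h : T -> T') (s : seq T) :
  uniq (map h s) -> {in s &, injective h}.
Proof.
elim: s => [//|a s IH] /= /andP[has us] p q.
rewrite !in_cons => /orP[/eqP->|ps] /orP[/eqP->|qs] // hpq.
- by move: has; rewrite hpq map_f.
- by move: has; rewrite -hpq map_f.
- exact: IH.
Qed.

Lemma prefix_subset (T : eqType) (s1 s2 : seq T) :
  prefix s1 s2 -> {subset s1 <= s2}.
Proof. by move=> /prefixP[s ->] x; rewrite mem_cat => ->. Qed.

Lemma prefix_dom (s1 s2 : seq (nat * nat)) :
  prefix s1 s2 -> {subset map fst s1 <= map fst s2}.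
Proof. by move=> /prefixP[s ->] x; rewrite map_cat mem_cat => ->. Qed.

Definition lookup (L : seq (nat * nat)) (v : nat) : nat :=
  (nth (0%N, 0%N) L (index v (map fst L))).2.

Lemma lookup_mem (L : seq (nat * nat)) (v : nat) :
  v \in map fst L -> (v, lookup L v) \in L.
Proof.
move=> vL; rewrite /lookup.
have iL : (index v (map fst L) < size L)%N by rewrite -(size_map fst) index_mem.
have fst_nth : (nth (0%N, 0%N) L (index v (map fst L))).1 = v.
  by rewrite -(nth_map _ 0%N) // nth_index.
by rewrite -{1}fst_nth -surjective_pairing mem_nth.
Qed.

(** * The back-and-forth construction *)

Section BackAndForth.
Variable G : graph.
Variable S : seq nat.
Hypothesis noDom : no_finite_dominating_minus G S.
Variables (r : nat) (c : nat -> nat -> 'I_r).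
Hypothesis csym : edge_coloring c.
Variable U : set_system nat.
Hypothesis UU : UltraFilter U.
Hypothesis Unonnull : forall B, U B -> ~ null B.
Variable j : 'I_r.
Let A := colour_nbhd U c j.
Hypothesis UA : U A.

Definition partial_copy (L : seq (nat * nat)) : Prop :=
  [/\ uniq (map fst L), uniq (map snd L),
      (forall p, p \in L -> (0 < p.2)%N /\ A p.2) &
      (forall p q, p \in L -> q \in L -> adj G p.1 q.1 -> c p.2 q.2 = j)].

(* Elements of A having colour j towards every image of L form a U-large
   set, as each y in A satisfies U [set z | c y z = j]. *)
Lemma colour_nbhd_images_large (L : seq (nat * nat)) :
  partial_copy L ->
  U [set z | A z /\ forall y, y \in map snd L -> c y z = j].
Proof.
move=> [_ _ imgA _]; apply: filterI UA _; apply: filter_seqI => y /mapP[p pL ->].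
exact: (imgA p pL).2.
Qed.

Definition new_image (L : seq (nat * nat)) : set nat :=
  [set z | [/\ (0 < z)%N, z \notin map snd L, A z &
               forall y, y \in map snd L -> c y z = j]].

Definition fresh_image (L : seq (nat * nat)) : nat := xget 0%N (new_image L).

(* A new image exists since U-large sets are non-null, hence infinite. *)
Lemma fresh_imageP (L : seq (nat * nat)) :
  partial_copy L -> new_image L (fresh_image L).
Proof.
move=> copyL; apply: xgetPex.
have [z [[Az colz] zL z0]] :=
  nonnull_avoid (map snd L) (Unonnull (colour_nbhd_images_large copyL)).
by exists z.
Qed.

Definition forth (w : nat) (L : seq (nat * nat)) : seq (nat * nat) :=
  if w \in map fst L then L else rcons L (w, fresh_image L).

Lemma forth_prefix (w : nat) (L : seq (nat * nat)) : prefix L (forth w L).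
Proof. by rewrite /forth; case: ifP => _; [exact: prefix_refl|exact: prefix_rcons]. Qed.

Lemma forth_dom (w : nat) (L : seq (nat * nat)) : w \in map fst (forth w L).
Proof. by rewrite /forth; case: ifP => // _; rewrite map_rcons mem_rcons mem_head. Qed.

Lemma forth_cases (w : nat) (L : seq (nat * nat)) (p : nat * nat) :
  p \in forth w L -> p \in L \/ p.1 \notin map fst L.
Proof.
rewrite /forth; case: ifP => [_|wL]; first by left.
by rewrite mem_rcons in_cons => /orP[/eqP-> /=|]; [rewrite wL; right|left].
Qed.

(* A forth step preserves partial copies: the new image has colour j
   towards all previous images. *)
Lemma forth_copy (w : nat) (L : seq (nat * nat)) :
  partial_copy L -> partial_copy (forth w L).
Proof.
move=> copyL; rewrite /forth; case: ifP => // wL.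
have [z0 zL Az colz] := fresh_imageP copyL.
case: copyL => ufst usnd imgA colL; split.
- by rewrite map_rcons rcons_uniq wL.
- by rewrite map_rcons rcons_uniq zL.
- by move=> p; rewrite mem_rcons in_cons => /orP[/eqP->//|]; exact: imgA.
- move=> p q; rewrite !mem_rcons !in_cons.
  move=> /orP[/eqP->|pL] /orP[/eqP->|qL] /=.
  + by move=> /adj_irrefl.
  + by move=> _; rewrite csym; apply: colz; apply: map_f.
  + by move=> _; apply: colz; apply: map_f.
  + exact: colL.
Qed.

Definition forth_all (s : seq nat) (L : seq (nat * nat)) : seq (nat * nat) :=
  foldl (fun L w => forth w L) L s.

Lemma forth_allP (s : seq nat) (L : seq (nat * nat)) :
  partial_copy L ->
  [/\ partial_copy (forth_all s L), prefix L (forth_all s L) &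
      {subset s <= map fst (forth_all s L)}].
Proof.
elim: s L => [|w s IH] L copyL; first by split => //; exact: prefix_refl.
have [copy' pre' dom'] := IH _ (forth_copy w copyL); split => //.
  exact: prefix_trans (forth_prefix w L) pre'.
move=> x; rewrite in_cons => /orP[/eqP->|]; last exact: dom'.
exact: prefix_dom pre' _ (forth_dom w L).
Qed.

Definition stage0 : seq (nat * nat) := forth_all S [::].

Lemma stage0P : partial_copy stage0 /\ {subset S <= map fst stage0}.
Proof.
have nil_copy : partial_copy [::] by split.
by have [] := forth_allP S nil_copy.
Qed.

Definition back_targets : set nat :=
  [set z | [/\ (0 < z)%N, A z & forall y, y \in map snd stage0 -> c y z = j]].

(* The back targets form a U-large set: U contains the positive integers
   (the complement is null) and the elements of A coloured j towards the
   images of stage 0. *)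
Lemma back_targets_large : U back_targets.
Proof.
have Upos : U [set z | (0 < z)%N].
  apply: ultra_conull => //; apply: null_sub (null_finite [:: 0%N]) => z /=.
  by case: z.
apply: filterS (filterI Upos (colour_nbhd_images_large stage0P.1)).
by move=> z [z0 [Az colz]].
Qed.

Definition new_vertex (L : seq (nat * nat)) : set nat :=
  [set v | [/\ v \notin S, v \notin map fst L &
               forall x, x \in map fst L -> x \notin S -> ~ adj G v x]].

Definition fresh_vertex (L : seq (nat * nat)) : nat := xget 0%N (new_vertex L).

(* Such a vertex exists since the mapped vertices outside S do not dominate
   G - S. *)
Lemma fresh_vertexP (L : seq (nat * nat)) : new_vertex L (fresh_vertex L).
Proof.
apply: xgetPex; apply: contrapT => noNew.
apply: (noDom (X := [seq x <- map fst L | x \notin S])); split.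
  by move=> x; rewrite mem_filter => /andP[].
move=> v vS vX; apply: contrapT => noNbr; apply: noNew; exists v; split => //.
  by apply/negP => vL; move: vX; rewrite mem_filter vS vL.
move=> x xL xS adjvx; apply: noNbr; exists x => //.
by rewrite mem_filter xS xL.
Qed.

Definition back (n : nat) (L : seq (nat * nat)) : seq (nat * nat) :=
  if `[< back_targets n >] && (n \notin map snd L)
  then rcons L (fresh_vertex L, n) else L.

Lemma back_prefix (n : nat) (L : seq (nat * nat)) : prefix L (back n L).
Proof. by rewrite /back; case: ifP => _; [exact: prefix_rcons|exact: prefix_refl]. Qed.

Lemma back_range (n : nat) (L : seq (nat * nat)) :
  back_targets n -> n \in map snd (back n L).
Proof.
move=> Dn; rewrite /back (asboolT Dn) /=.
by case: ifPn => [_|/negPn//]; rewrite map_rcons mem_rcons mem_head.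
Qed.

Lemma back_cases (n : nat) (L : seq (nat * nat)) (p : nat * nat) :
  p \in back n L -> p \in L \/ p.1 \notin S.
Proof.
rewrite /back; case: ifP => [_|_]; last by left.
rewrite mem_rcons in_cons => /orP[/eqP-> /=|]; last by left.
by right; have [] := fresh_vertexP L.
Qed.

(* A back step preserves partial copies whose vertices of S are mapped as
   in stage 0: the new vertex is adjacent only to vertices of S, towards
   whose images n has colour j. *)
Lemma back_copy (n : nat) (L : seq (nat * nat)) :
  partial_copy L -> (forall p, p \in L -> p.1 \in S -> p \in stage0) ->
  partial_copy (back n L).
Proof.
move=> copyL S_stage0; rewrite /back.
case: ifP => // /andP[/asboolP [n0 An coln] nL].
have [vS vL vNbr] := fresh_vertexP L; set v := fresh_vertex L in vS vL vNbr *.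
case: copyL => ufst usnd imgA colL.
have colv p : p \in L -> adj G p.1 v -> c p.2 n = j.
  move=> pL adjpv; have [pS|pS] := boolP (p.1 \in S).
    by apply: coln; apply: map_f; exact: S_stage0.
  by case: (vNbr p.1 (map_f _ pL) pS); exact: adj_sym.
split.
- by rewrite map_rcons rcons_uniq vL.
- by rewrite map_rcons rcons_uniq nL.
- by move=> p; rewrite mem_rcons in_cons => /orP[/eqP->//|]; exact: imgA.
- move=> p q; rewrite !mem_rcons !in_cons.
  move=> /orP[/eqP->|pL] /orP[/eqP->|qL] /=.
  + by move=> /adj_irrefl.
  + by move=> /adj_sym/(colv q qL); rewrite csym.
  + exact: colv.
  + exact: colL.
Qed.

Fixpoint stage (n : nat) : seq (nat * nat) :=
  if n is m.+1 then back m (forth m (stage m)) else stage0.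

Definition stage_inv (L : seq (nat * nat)) : Prop :=
  [/\ partial_copy L, {subset S <= map fst L} &
      forall p, p \in L -> p.1 \in S -> p \in stage0].

(* Every stage satisfies the invariant: forth steps keep it since S is
   already mapped, back steps since they only map vertices outside S. *)
Lemma stage_invP (n : nat) : stage_inv (stage n).
Proof.
elim: n => [|n [copyn Sdom Sfix]] /=.
  by have [copy0 Sdom0] := stage0P; split.
have prefA := forth_prefix n (stage n).
have SfixA p : p \in forth n (stage n) -> p.1 \in S -> p \in stage0.
  move=> pA pS; have [pn|pnew] := forth_cases pA; first exact: Sfix.
  by move: pnew; rewrite Sdom.
split.
- by apply: back_copy => //; exact: forth_copy.
- move=> x xS; apply: prefix_dom (back_prefix _ _) _ _.
  exact: prefix_dom prefA _ (Sdom x xS).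
- move=> p pB pS; have [pA|] := back_cases pB; first exact: SfixA.
  by rewrite pS.
Qed.

Lemma stage_prefix (n m : nat) : (n <= m)%N -> prefix (stage n) (stage m).
Proof.
elim: m => [|m IH]; first by rewrite leqn0 => /eqP->; exact: prefix_refl.
rewrite leq_eqVlt => /orP[/eqP->|]; first exact: prefix_refl.
rewrite ltnS => /IH pre_nm; apply: prefix_trans pre_nm _.
exact: prefix_trans (forth_prefix _ _) (back_prefix _ _).
Qed.

Lemma stage_dom (n : nat) : n \in map fst (stage n.+1).
Proof. exact: prefix_dom (back_prefix _ _) _ (forth_dom n (stage n)). Qed.

(* The limit of the stages: vertex v is mapped at stage v+1. *)
Definition embedding (v : nat) : nat := lookup (stage v.+1) v.

Lemma embedding_mem (v N : nat) : (v < N)%N -> (v, embedding v) \in stage N.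
Proof.
move=> vN; apply: prefix_subset (stage_prefix vN) _ _.
exact: lookup_mem (stage_dom v).
Qed.

Lemma embedding_mem2 (u v : nat) :
  (u, embedding u) \in stage (maxn u v).+1 /\
  (v, embedding v) \in stage (maxn u v).+1.
Proof. by split; apply: embedding_mem; rewrite ltnS (leq_maxl, leq_maxr). Qed.

(* The embedding is an injective, positive, monochromatic copy of G, since
   each property holds in a stage containing the relevant pairs. *)
Lemma embedding_inj : injective embedding.
Proof.
move=> u v euv; have [uN vN] := embedding_mem2 u v.
have [[_ usnd _ _] _ _] := stage_invP (maxn u v).+1.
by have [] := uniq_map_inj usnd uN vN euv.
Qed.

Lemma embedding_pos (v : nat) : (0 < embedding v)%N.
Proof.
have [[_ _ imgA _] _ _] := stage_invP v.+1.
exact: (imgA _ (embedding_mem (ltnSn v))).1.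
Qed.

Lemma embedding_mono (u v : nat) :
  adj G u v -> c (embedding u) (embedding v) = j.
Proof.
have [uN vN] := embedding_mem2 u v.
have [[_ _ _ colN] _ _] := stage_invP (maxn u v).+1.
exact: colN _ _ uN vN.
Qed.

(* Every back target n is in the image, being an image already at stage n+1. *)
Lemma back_targets_image : back_targets `<=` range embedding.
Proof.
move=> n Dn; have /mapP [p pL ->] := back_range (forth n (stage n)) Dn.
set N := (maxn n p.1).+1.
have pN : p \in stage N.
  by apply: prefix_subset (@stage_prefix n.+1 N _) _ pL; rewrite ltnS leq_maxl.
have qN : (p.1, embedding p.1) \in stage N.
  by apply: embedding_mem; rewrite ltnS leq_maxr.
have [[ufst _ _ _] _ _] := stage_invP N.
by exists p.1 => //; rewrite -[in RHS](uniq_map_inj ufst qN pN erefl).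
Qed.

Lemma range_embedding_nonnull : ~ null (range embedding).
Proof.
move=> nullR; apply: (Unonnull back_targets_large).
exact: null_sub back_targets_image nullR.
Qed.

End BackAndForth.

Theorem mainTheorem3 (G : graph) :
  (exists S : seq nat, no_finite_dominating_minus G S) ->
  forall (r : nat) (c : nat -> nat -> 'I_r), edge_coloring c ->
  exists f : nat -> nat,
    mono_copy G c f /\ (0 < upper_density (range f))%E.
Proof.
move=> [S noDom] r c csym.
have [U [UU Unonnull]] := nonnull_ultrafilter.
have [j UA] := ultra_colour c UU.
exists (embedding G S c U j); split.
  split; [exact: embedding_inj | split; first exact: embedding_pos].
  by exists j => u v; exact: embedding_mono.
exact/upper_density_gt0/(range_embedding_nonnull noDom csym UU Unonnull UA).
Qed.
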